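(* Let $\mathbb{F}_q$ be a finite field. For all $u,v\in\mathbb{F}_q$ with $u^3\ne27$ and $v^3\ne27$, we have $E_{\mathrm{H},u}\cong_{\mathbb{F}_q}E_{\mathrm{H},v}$ if and only if there exist $\zeta_1,\zeta_2\in\mathbb{F}_q$ with $\zeta_1^3=\zeta_2^3=1$ such that either (1) $v=\zeta_1u$, or (2) $q\equiv1\pmod3$ and $v=\frac{3\zeta_1(u+6\zeta_2)}{u-3\zeta_2}$.
   Context: For $u\in\mathbb{F}_q$ with $u^3\ne27$, the Hessian curve $E_{\mathrm{H},u}$ is the elliptic curve $X^3+Y^3+1=uXY$ over $\mathbb{F}_q$. Two such curves are $\mathbb{F}_q$-isomorphic ($\cong_{\mathbb{F}_q}$) if they are birationally equivalent over $\mathbb{F}_q$, equivalently if their Weierstrass models are isomorphic via a Weierstrass change of variables $X\mapsto\alpha^2\tilde X+\beta$, $Y\mapsto\alpha^3\tilde Y+\alpha^2\gamma\tilde X+\delta$ with $\alpha,\beta,\gamma,\delta\in\mathbb{F}_q$, $\alpha\ne0$. *)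

From HB Require Import structures.
From mathcomp Require Import all_boot all_order all_algebra all_field.
Set Implicit Arguments. Unset Strict Implicit. Unset Printing Implicit Defensive.
Import GRing.Theory.
Local Open Scope ring_scope.

(* A (long) Weierstrass equation
     Y^2 + a1 X Y + a3 Y = X^3 + a2 X^2 + a4 X + a6
   is given by its coefficient list (a1, a2, a3, a4, a6). *)
Record wcoef (F : Type) := WCoef { wa1 : F; wa2 : F; wa3 : F; wa4 : F; wa6 : F }.

(* Two Weierstrass equations E (coefficients a) and E' (coefficients a') are
   isomorphic over F if there is a Weierstrass change of variables
     X |-> al^2 X' + be,  Y |-> al^3 Y' + al^2 ga X' + de   (al <> 0)
   over F transforming the equation of E into al^6 times the equation of E'.
   Expanding the substitution, this is exactly the standard system of
   coefficient transformation formulas (Silverman III.1, u=al, r=be, s=ga,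
   t=de): *)
Definition weier_iso (F : fieldType) (E E' : wcoef F) : Prop :=
  exists al be ga de : F,
    al != 0 /\
    [/\ al * wa1 E' = wa1 E + 2 * ga,
        al ^+ 2 * wa2 E' = wa2 E - ga * wa1 E + 3 * be - ga ^+ 2,
        al ^+ 3 * wa3 E' = wa3 E + be * wa1 E + 2 * de,
        al ^+ 4 * wa4 E' = wa4 E - ga * wa3 E + 2 * be * wa2 E
                           - (de + be * ga) * wa1 E + 3 * be ^+ 2 - 2 * ga * de
      & al ^+ 6 * wa6 E' = wa6 E + be * wa4 E + be ^+ 2 * wa2 E + be ^+ 3
                           - de * wa3 E - de ^+ 2 - be * de * wa1 E].

(* Weierstrass model of the Hessian curve E_{H,u} : X^3 + Y^3 + 1 = u X Y,
   valid in every characteristic (when u^3 <> 27):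
     Y^2 + u X Y + 9 Y = X^3 - 9 u X - (u^3 + 27),
   with discriminant (u^3 - 27)^3.  In projective coordinates (X:Y:Z) of the
   Hessian, with O = (1:-1:0), the birational map is
     W0 = 3X + 3Y + uZ,  x = -(9Z + u^2 (X+Y)) / W0,  y = (u^3 - 27) X / W0. *)
Definition hessian_weier (F : fieldType) (u : F) : wcoef F :=
  WCoef u 0 9 (- (9 * u)) (- (u ^+ 3 + 27)).

Definition hessian_iso (F : fieldType) (u v : F) : Prop :=
  weier_iso (hessian_weier u) (hessian_weier v).

From HB Require Import structures.
From mathcomp Require Import all_boot all_order all_algebra all_field.
From mathcomp Require Import all_fingroup all_solvable ring.
Import GRing.Theory.
Set Implicit Arguments.
Unset Strict Implicit.
Unset Printing Implicit Defensive.
Local Open Scope ring_scope.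

(* A change of variables between the Weierstrass models of E_{H,v} and E_{H,u}
   maps inflection points to inflection points, together with their tangent
   lines.  Away from characteristic 3 the eight affine flexes of E_{H,u} are
   indexed by the slope m of their tangent, a root of
   (m^3 - 27) ((m + u)^3 + 27) (m^2 + u m + u^2): the first two factors give
   the flexes (z u + 3 z^2, 0) and their negatives, the last one the two flexes
   with x-coordinate -u^2/3, which need a primitive cube root of unity.  The
   three flexes (z v + 3 z^2, 0) of E_{H,v} do not share an x-coordinate, so
   one of them is sent, after composing with [-1] if needed, to a flex
   (z u + 3 z^2, 0).  Then the scaling t of the change of variables is a root
   of (t - z) times a quadratic of discriminant -27 (u - 3 z)^2: the linear
   factor gives v = zeta u, the quadratic one the Moebius transforms of u.
   Conversely both kinds of maps are explicit changes of variables.  In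
   characteristic 3 the transformation formulas force v = u directly, and over
   F_q a primitive cube root of unity exists iff q = 1 (mod 3). *)

Section WeierstrassChange.
Variable F : fieldType.
Implicit Types (E : wcoef F) (al be ga de m x y : F).

Definition weier_change E E' al be ga de : Prop :=
  [/\ al * wa1 E' = wa1 E + 2 * ga,
      al ^+ 2 * wa2 E' = wa2 E - ga * wa1 E + 3 * be - ga ^+ 2,
      al ^+ 3 * wa3 E' = wa3 E + be * wa1 E + 2 * de,
      al ^+ 4 * wa4 E' = wa4 E - ga * wa3 E + 2 * be * wa2 E
                         - (de + be * ga) * wa1 E + 3 * be ^+ 2 - 2 * ga * de
    & al ^+ 6 * wa6 E' = wa6 E + be * wa4 E + be ^+ 2 * wa2 E + be ^+ 3
                         - de * wa3 E - de ^+ 2 - be * de * wa1 E].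

Definition weier_eq E x y : F :=
  y ^+ 2 + wa1 E * x * y + wa3 E * y
  - (x ^+ 3 + wa2 E * x ^+ 2 + wa4 E * x + wa6 E).

Lemma weier_eq_change {E E' : wcoef F} {al be ga de : F} x y :
  weier_change E E' al be ga de ->
  weier_eq E (al ^+ 2 * x + be) (al ^+ 3 * y + al ^+ 2 * ga * x + de)
  = al ^+ 6 * weier_eq E' x y.
Proof.
case=> e1 e2 e3 e4 e6.
have -> : al ^+ 6 * weier_eq E' x y =
    al ^+ 6 * (y ^+ 2 - x ^+ 3) + (al * wa1 E') * al ^+ 5 * x * y
    + (al ^+ 3 * wa3 E') * al ^+ 3 * y - (al ^+ 2 * wa2 E') * al ^+ 4 * x ^+ 2
    - (al ^+ 4 * wa4 E') * al ^+ 2 * x - al ^+ 6 * wa6 E'.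
  by rewrite /weier_eq; ring.
by rewrite e1 e2 e3 e4 e6 /weier_eq; ring.
Qed.

Lemma weier_change_comp (E E' E'' : wcoef F) al be ga de al' be' ga' de' :
  al != 0 ->
  weier_change E E' al be ga de -> weier_change E' E'' al' be' ga' de' ->
  weier_change E E'' (al * al') (be + al ^+ 2 * be') (ga + al * ga')
    (de + al ^+ 3 * de' + al ^+ 2 * ga * be').
Proof.
move=> al0 [e1 e2 e3 e4 e6] [f1 f2 f3 f4 f6].
have coefE n (a b : F) : al ^+ n * a = b -> a = b / al ^+ n.
  by move=> <-; rewrite [_ * a]mulrC mulfK // expf_neq0.
by split; rewrite ?exprMn -[LHS]mulrA ?f1 ?f2 ?f3 ?f4 ?f6 ?(coefE 1 _ _ e1)
  ?(coefE _ _ _ e2) ?(coefE _ _ _ e3) ?(coefE _ _ _ e4) ?(coefE _ _ _ e6); field.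
Qed.

(* The line of slope m through the point (x, y) of E meets E only there: the
   last two conditions say that 3 x and 3 x^2 are the first two symmetric
   functions of the roots of the cubic [weier_eq E t (y + m (t - x))]. *)
Definition flex_tangent E m x y : Prop :=
  [/\ weier_eq E x y = 0,
      3 * x = m ^+ 2 + wa1 E * m - wa2 E
    & 3 * x ^+ 2 + (2 * m + wa1 E) * (y - m * x) + wa3 E * m - wa4 E = 0].

Lemma flex_tangent_change {E E' : wcoef F} {al be ga de m x y : F} :
  weier_change E E' al be ga de -> flex_tangent E' m x y ->
  flex_tangent E (al * m + ga) (al ^+ 2 * x + be)
    (al ^+ 3 * y + al ^+ 2 * ga * x + de).
Proof.
move=> H [on_xy h2 h4].
have {}h2 : wa2 E' = m ^+ 2 + wa1 E' * m - 3 * x by rewrite h2; ring.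
have {}h4 : wa4 E' = 3 * x ^+ 2 + (2 * m + wa1 E') * (y - m * x) + wa3 E' * m.
  by rewrite -[RHS]subr0 -h4; ring.
have [e1 e2 e3 e4 _] := H.
have a1E : wa1 E = al * wa1 E' - 2 * ga by rewrite e1; ring.
have a2E : wa2 E = al ^+ 2 * wa2 E' + ga * wa1 E - 3 * be + ga ^+ 2.
  by rewrite e2; ring.
have a3E : wa3 E = al ^+ 3 * wa3 E' - be * wa1 E - 2 * de by rewrite e3; ring.
have a4E : wa4 E = al ^+ 4 * wa4 E' + ga * wa3 E - 2 * be * wa2 E
                   + (de + be * ga) * wa1 E - 3 * be ^+ 2 + 2 * ga * de.
  by rewrite e4; ring.
split.
- by rewrite (weier_eq_change x y H) on_xy mulr0.
- by rewrite a2E a1E h2; ring.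
- by rewrite a4E a3E a2E a1E h4 h2; ring.
Qed.

Lemma weier_change_opp E : weier_change E E (-1) 0 (- wa1 E) (- wa3 E).
Proof. by split; ring. Qed.

Lemma flex_tangent_opp E m x y :
  flex_tangent E m x y ->
  flex_tangent E (- m - wa1 E) x (- y - wa1 E * x - wa3 E).
Proof.
move/(flex_tangent_change (weier_change_opp E)).
have -> : -1 * m + - wa1 E = - m - wa1 E by ring.
have -> : (-1) ^+ 2 * x + 0 = x by ring.
by have -> : (-1) ^+ 3 * y + (-1) ^+ 2 * - wa1 E * x + - wa3 E
              = - y - wa1 E * x - wa3 E by ring.
Qed.

Lemma weier_iso_trans (E E' E'' : wcoef F) :
  weier_iso E E' -> weier_iso E' E'' -> weier_iso E E''.
Proof.
case=> al [be [ga [de [al0 H]]]] [al' [be' [ga' [de' [al0' H']]]]].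
exists (al * al'), (be + al ^+ 2 * be'), (ga + al * ga'),
  (de + al ^+ 3 * de' + al ^+ 2 * ga * be').
by split; [exact: mulf_neq0 | exact: weier_change_comp al0 H H'].
Qed.

End WeierstrassChange.

Section HessianModel.
Variable F : fieldType.
Implicit Types u v m x y z w t : F.

Lemma cube1_neq0 z : z ^+ 3 = 1 -> z != 0.
Proof. by move=> hz; apply: contra_eq_neq hz => ->; rewrite expr0n eq_sym oner_eq0. Qed.

Lemma cube1_sqr z : z ^+ 3 = 1 -> (z ^+ 2) ^+ 3 = 1.
Proof. by move=> hz; rewrite -exprM mulnC exprM hz expr1n. Qed.

Lemma cyclo3_cube1 w : w ^+ 2 + w + 1 = 0 -> w ^+ 3 = 1.
Proof.
move=> hw; apply/eqP; rewrite -subr_eq0; apply/eqP.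
by transitivity ((w - 1) * (w ^+ 2 + w + 1)); [ring | rewrite hw mulr0].
Qed.

Lemma cyclo3_neq1 w : (3 : F) != 0 -> w ^+ 2 + w + 1 = 0 -> w != 1.
Proof. by move=> h3 hw; apply: contra_neq h3 => w1; rewrite -hw w1; ring. Qed.

Lemma hessian_sub3_neq0 u z : z ^+ 3 = 1 -> u ^+ 3 != 27 -> u - 3 * z != 0.
Proof.
move=> hz; apply: contra_neq => /eqP; rewrite subr_eq0 => /eqP ->.
by rewrite exprMn hz mulr1; ring.
Qed.

Lemma nat9_27_neq0 : (3 : F) != 0 -> (9 : F) != 0 /\ (27 : F) != 0.
Proof.
move=> h3; split; first by rewrite (_ : 9 = 3 * 3) ?mulf_neq0 //; ring.
by rewrite (_ : 27 = 3 * 3 * 3) ?mulf_neq0 //; ring.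
Qed.

Lemma hessian_flex_tangent v z :
  z ^+ 3 = 1 -> flex_tangent (hessian_weier v) (3 * z) (z * v + 3 * z ^+ 2) 0.
Proof. by move=> hz; split; rewrite /weier_eq /=; ring: hz. Qed.

Lemma hessian_flex_slope u m x y :
  (3 : F) != 0 -> flex_tangent (hessian_weier u) m x y ->
  (m ^+ 3 - 27) * ((m + u) ^+ 3 + 27) * (m ^+ 2 + u * m + u ^+ 2) = 0.
Proof.
move=> h3 [on_xy + +] => /= hx c3.
(* Eliminate y between the curve equation and the tangency condition C3,
   which is linear in y; x is a function of m. *)
have {}hx : x = (m ^+ 2 + u * m) / 3 by rewrite -[m ^+ 2 + _]subr0 -hx; field.
pose C3 := 3 * x ^+ 2 + (2 * m + u) * (y - m * x) + 9 * m + 9 * u.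
have {}c3 : C3 = 0 by rewrite /C3 -[RHS]c3; ring.
transitivity (-27 * ((2 * m + u) ^+ 2 * weier_eq (hessian_weier u) x y
                    - C3 * (2 * (2 * m + u) * y - C3 + (u * x + 9) * (2 * m + u)))).
  by rewrite /C3 /weier_eq /= hx; field.
by rewrite on_xy c3; ring.
Qed.

Lemma hessian_ux9_neq0 u z :
  z ^+ 3 = 1 -> u ^+ 3 != 27 -> u * (z * u + 3 * z ^+ 2) + 9 != 0.
Proof.
move=> hz hu; apply: contra_neq (hessian_sub3_neq0 hz hu) => h.
have : z * (u ^+ 3 - 27) = 0.
  transitivity ((u - 3 * z) * (u * (z * u + 3 * z ^+ 2) + 9)); last by rewrite h mulr0.
  by ring: hz.
by move/eqP; rewrite mulf_eq0 subr_eq0 (negbTE hu) orbF (negbTE (cube1_neq0 hz)).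
Qed.

Lemma hessian_flex_cube1 u z x y :
  (3 : F) != 0 -> u ^+ 3 != 27 -> z ^+ 3 = 1 ->
  flex_tangent (hessian_weier u) (3 * z) x y ->
  x = z * u + 3 * z ^+ 2 /\ (y = 0 \/ u = - 6 * z /\ y = - (u * x + 9)).
Proof.
move=> h3 hu hz [+ + +] => /= on_xy hx c3.
have {}hx : x = z * u + 3 * z ^+ 2 by apply: (mulfI h3); rewrite hx; ring.
split=> //.
have : y * (y + (u * x + 9)) = 0 by rewrite -[RHS]on_xy /weier_eq /= hx; ring: hz.
move/eqP; rewrite mulf_eq0 addr_eq0 => /orP [/eqP -> | /eqP hy]; [by left | right].
split=> //.
have ux9 := hessian_ux9_neq0 hz hu; rewrite -hx in ux9.
have : (6 * z + u) * (u * x + 9) = 0 by rewrite -[RHS]oppr0 -c3 hy hx; ring: hz.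
move/eqP; rewrite mulf_eq0 (negbTE ux9) orbF addr_eq0 => /eqP hu6.
by rewrite -[u]opprK -hu6; ring.
Qed.

Lemma hessian_flex_cyclo3 u m x y :
  (3 : F) != 0 -> flex_tangent (hessian_weier u) m x y ->
  m ^+ 2 + u * m + u ^+ 2 = 0 -> exists w, w ^+ 2 + w + 1 = 0.
Proof.
move=> h3 [+ + _] => /= on_xy hx hm; have [h9 _] := nat9_27_neq0 h3.
have [u0 | un0] := eqVneq u 0; last first.
  by exists (m / u); rewrite -[RHS](mul0r (u ^- 2)) -hm; field.
have m0 : m = 0.
  have : m ^+ 2 = 0 by rewrite -hm u0; ring.
  by move/eqP; rewrite expf_eq0 => /eqP.
have x0 : x = 0 by apply: (mulfI h3); rewrite hx m0 u0; ring.
exists (y / 3 + 1); rewrite -[RHS](mulr0 (9^-1)) -on_xy /weier_eq /= x0 u0.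
by field; rewrite h9.
Qed.

Lemma hessian_flexP u m x y :
  (3 : F) != 0 -> u ^+ 3 != 27 -> flex_tangent (hessian_weier u) m x y ->
  (exists2 z, z ^+ 3 = 1 &
     x = z * u + 3 * z ^+ 2 /\
     (m = 3 * z /\ y = 0 \/ m = - u - 3 * z /\ y = - (u * x + 9)))
  \/ (exists w, w ^+ 2 + w + 1 = 0) /\ 3 * x + u ^+ 2 = 0.
Proof.
move=> h3 hu Hf; have [_ h27] := nat9_27_neq0 h3.
have := hessian_flex_slope h3 Hf.
move/eqP; rewrite !mulf_eq0 -orbA => /or3P [] /eqP hm; last first.
- right; split; first exact: hessian_flex_cyclo3 Hf hm.
  by case: Hf => _ /= hx _; rewrite hx -[RHS]hm; ring.
- left; pose z := - (m + u) / 3.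
  have hz : z ^+ 3 = 1.
    apply/eqP; rewrite -subr_eq0; apply/eqP.
    transitivity (- ((m + u) ^+ 3 + 27) / 27); first by rewrite /z; field; rewrite h27.
    by rewrite hm oppr0 mul0r.
  have hm3 : m = - u - 3 * z by rewrite /z; field.
  have := flex_tangent_opp Hf.
  rewrite /= (_ : - m - u = 3 * z); last by rewrite hm3; ring.
  move=> /(hessian_flex_cube1 h3 hu hz) [hx [hy | [hu6 hy]]].
    exists z => //; split=> //; right.
    by split=> //; rewrite -[y]addr0 -hy; ring.
  exists z => //; split=> //; left; split; first by rewrite hm3 hu6; ring.
  by apply: oppr_inj; rewrite oppr0 -[RHS](subrr (- (u * x + 9))) -{1}hy; ring.
- left; pose z := m / 3.
  have hz : z ^+ 3 = 1.
    apply/eqP; rewrite -subr_eq0; apply/eqP.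
    transitivity ((m ^+ 3 - 27) / 27); first by rewrite /z; field; rewrite h27.
    by rewrite hm mul0r.
  have hm3 : m = 3 * z by rewrite /z; field.
  move: Hf; rewrite hm3 => /(hessian_flex_cube1 h3 hu hz) [hx [hy | [hu6 hy]]].
    by exists z => //; split=> //; left.
  by exists z => //; split=> //; right; split=> //; rewrite hu6; ring.
Qed.

Definition hessian_related u v : Prop :=
  (exists2 z, z ^+ 3 = 1 & v = z * u) \/
  (exists w, w ^+ 2 + w + 1 = 0) /\
  exists z1 z2, [/\ z1 ^+ 3 = 1, z2 ^+ 3 = 1 & v = 3 * z1 * (u + 6 * z2) / (u - 3 * z2)].

Lemma hessian_scale_mobius u v z zp t :
  (3 : F) != 0 -> u ^+ 3 != 27 -> z ^+ 3 = 1 -> zp ^+ 3 = 1 -> t != 0 ->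
  27 * t ^+ 2 - 9 * (3 * z + u) * t + 9 * z ^+ 2 + 3 * z * u + u ^+ 2 = 0 ->
  t * v = zp * (u + 6 * z - 6 * t) ->
  exists2 w, w ^+ 2 + w + 1 = 0 &
    v = 3 * (zp * w ^+ 2) * (u + 6 * (w * z)) / (u - 3 * (w * z)).
Proof.
move=> h3 hu hz hzp t0 hq htv.
have [h9 _] := nat9_27_neq0 h3.
have hu3 := hessian_sub3_neq0 hz hu.
pose w := (9 * t - 3 * z - 2 * u) / (u - 3 * z).
have hw : w ^+ 2 + w + 1 = 0.
  transitivity (3 * (27 * t ^+ 2 - 9 * (3 * z + u) * t + 9 * z ^+ 2 + 3 * z * u + u ^+ 2)
                / (u - 3 * z) ^+ 2); first by rewrite /w; field.
  by rewrite hq mulr0 mul0r.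
exists w => //.
have hwz : u - 3 * (w * z) != 0.
  by apply: hessian_sub3_neq0 hu; rewrite exprMn cyclo3_cube1 // hz mulr1.
have ht : t = (w * (u - 3 * z) + 3 * z + 2 * u) / 9 by rewrite /w; field; rewrite h9 hu3.
have hw2 : w ^+ 2 = - w - 1 by rewrite -[LHS]subr0 -hw; ring.
have tw0 : w * (u - 3 * z) + 3 * z + 2 * u != 0.
  by apply: contra_neq t0 => h; rewrite ht h mul0r.
rewrite -[v](mulKf t0) htv ht.
by field: hw2 hz hzp; rewrite hwz h9 tw0.
Qed.

Lemma hessian_related_of_flex_match u v al b g d zp z :
  (3 : F) != 0 -> u ^+ 3 != 27 -> al != 0 -> zp ^+ 3 = 1 -> z ^+ 3 = 1 ->
  weier_change (hessian_weier u) (hessian_weier v) al b g d ->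
  al * (3 * zp) + g = 3 * z ->
  al ^+ 2 * (zp * v + 3 * zp ^+ 2) + b = z * u + 3 * z ^+ 2 ->
  al ^+ 3 * 0 + al ^+ 2 * g * (zp * v + 3 * zp ^+ 2) + d = 0 ->
  hessian_related u v.
Proof.
move=> h3 hu al0 hzp hz [/= e1 _ e3 _ _] hm hx hy.
have hg : g = 3 * z - 3 * (zp * al) by rewrite -hm; ring.
have htv : zp * al * v = zp * (u + 6 * z - 6 * (zp * al)).
  by rewrite -mulrA e1 hg; ring.
have hX : al ^+ 2 * (zp * v + 3 * zp ^+ 2) = zp * al * (u + 2 * g) + 3 * (zp * al) ^+ 2.
  by rewrite -e1; ring.
have hb : b = z * u + 3 * z ^+ 2 - al ^+ 2 * (zp * v + 3 * zp ^+ 2) by rewrite -hx; ring.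
have hd : d = - g * (al ^+ 2 * (zp * v + 3 * zp ^+ 2)) by rewrite -[LHS]subr0 -hy; ring.
have e3' : 9 * (zp * al) ^+ 3 = 9 + b * u + 2 * d by rewrite exprMn hzp mul1r mulrC.
have : (zp * al - z) * (27 * (zp * al) ^+ 2 - 9 * (3 * z + u) * (zp * al)
                        + 9 * z ^+ 2 + 3 * z * u + u ^+ 2) = 0.
  transitivity (9 * (zp * al) ^+ 3 - 9 - b * u - 2 * d); last by rewrite e3'; ring.
  by rewrite hd hb hX hg; ring: hz.
move/eqP; rewrite mulf_eq0 subr_eq0 => /orP [/eqP htz | /eqP hq].
  left; exists (zp * z ^+ 2); first by ring: hzp hz.
  have hzv : z * v = zp * u by rewrite -{1}htz htv htz; ring.
  by apply: (mulfI (cube1_neq0 hz)); rewrite hzv; ring: hz.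
have t0 : zp * al != 0 := mulf_neq0 (cube1_neq0 hzp) al0.
have [w hw hv] := hessian_scale_mobius h3 hu hz hzp t0 hq htv.
have hw3 := cyclo3_cube1 hw.
right; split; first by exists w.
by exists (zp * w ^+ 2), (w * z); split=> //; ring: hzp hz hw3.
Qed.

Lemma hessian_iso_rot u z : z ^+ 3 = 1 -> hessian_iso u (z * u).
Proof.
move=> hz; exists (z ^+ 2), 0, 0, 0; split; first by rewrite expf_neq0 ?cube1_neq0.
by split=> /=; ring: hz.
Qed.

Lemma hessian_iso_mobius u w :
  (3 : F) != 0 -> u ^+ 3 != 27 -> w ^+ 2 + w + 1 = 0 ->
  hessian_iso u (3 * (u + 6) / (u - 3)).
Proof.
move=> h3 hu hw; have [h9 h27] := nat9_27_neq0 h3.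
have hu3 : u - 3 != 0 by have := hessian_sub3_neq0 (expr1n _ 3) hu; rewrite mulr1.
have hw2 : w ^+ 2 = - w - 1 by rewrite -[LHS]subr0 -hw; ring.
have hw12 : 1 + 2 * w != 0.
  apply: contra_neq h3 => h.
  by transitivity (- (1 + 2 * w) ^+ 2); [ring: hw2 | rewrite h; ring].
exists (- (1 + 2 * w) * (u - 3) / 9), (- (u ^+ 2 + 3 * u + 9) / 9),
  (- (u * w + 2 * u + 6 * w + 3) / 3),
  ((u ^+ 3 * (w + 2) - 9 * u ^+ 2 * w + 27 * u * (w + 1) - 27 * w - 135) / 27).
split; first by rewrite !mulf_neq0 ?invr_eq0 ?oppr_eq0.
by split=> /=; field: hw2; rewrite ?h3 ?h9 ?h27 ?hu3.
Qed.

Lemma hessian_change_flex_image u v al b g d zp :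
  (3 : F) != 0 -> u ^+ 3 != 27 -> al != 0 -> zp ^+ 3 = 1 ->
  weier_change (hessian_weier u) (hessian_weier v) al b g d ->
  hessian_related u v \/
  (exists w, w ^+ 2 + w + 1 = 0) /\
  3 * (al ^+ 2 * (zp * v + 3 * zp ^+ 2) + b) + u ^+ 2 = 0.
Proof.
move=> h3 hu al0 hzp H.
have := hessian_flexP h3 hu (flex_tangent_change H (hessian_flex_tangent v hzp)).
case=> [[z hz [hx [[hm hy] | [hm hy]]]] | ]; [left | left | by right].
  exact: hessian_related_of_flex_match h3 hu al0 hzp hz H hm hx hy.
have opp0 : (-1 : F) != 0 by rewrite oppr_eq0 oner_eq0.
apply: (hessian_related_of_flex_match h3 hu _ hzp hz
          (weier_change_comp opp0 (weier_change_opp _) H)) => /=.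
- by rewrite mulN1r oppr_eq0.
- by transitivity (- (al * (3 * zp) + g) - u); [ring | rewrite hm; ring].
- by rewrite -hx; ring.
- transitivity (- (al ^+ 3 * 0 + al ^+ 2 * g * (zp * v + 3 * zp ^+ 2) + d)
                - u * (al ^+ 2 * (zp * v + 3 * zp ^+ 2) + b) - 9); first by ring.
  by rewrite hy; ring.
Qed.

Lemma hessian_flex_x_cyclo3 v w :
  (3 : F) != 0 -> w ^+ 2 + w + 1 = 0 ->
  v + 3 = w * v + 3 * w ^+ 2 -> v + 3 = w ^+ 2 * v + 3 * (w ^+ 2) ^+ 2 -> False.
Proof.
move=> h3 hw e1 e2; have hw3 := cyclo3_cube1 hw.
have x_eq r : r ^+ 3 = 1 -> r != 1 -> v + 3 = r * v + 3 * r ^+ 2 -> v = 3 * r ^+ 2.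
  move=> hr r1 e.
  have : (r - 1) * (v - 3 * r ^+ 2) = 0 by rewrite -[RHS](subrr (v + 3)) {1}e; ring: hr.
  by move/eqP; rewrite mulf_eq0 !subr_eq0 (negbTE r1) => /eqP.
have w1 := cyclo3_neq1 h3 hw.
have w21 : w ^+ 2 != 1 by apply: contra_neq w1 => h; rewrite -hw3 exprS h mulr1.
have hv1 := x_eq w hw3 w1 e1.
have hv2 := x_eq (w ^+ 2) (cube1_sqr hw3) w21 e2.
have : 3 * w * (w - 1) = 0 by rewrite -[RHS](subrr v) {1}hv1 hv2; ring: hw3.
move/eqP; rewrite !mulf_eq0 subr_eq0 (negbTE h3) (negbTE w1) orbF.
exact/negP/cube1_neq0.
Qed.

Lemma hessian_iso_related u v :
  (3 : F) != 0 -> u ^+ 3 != 27 -> hessian_iso u v -> hessian_related u v.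
Proof.
move=> h3 hu [al [b [g [d [al0 H]]]]].
have image zp (hzp : zp ^+ 3 = 1) := hessian_change_flex_image h3 hu al0 hzp H.
have x_inj zp zq : 3 * (al ^+ 2 * zp + b) + u ^+ 2 = 0 ->
    3 * (al ^+ 2 * zq + b) + u ^+ 2 = 0 -> zp = zq.
  move=> ep eq; apply: (mulfI (mulf_neq0 h3 (expf_neq0 2 al0))).
  transitivity (3 * (al ^+ 2 * zp + b) + u ^+ 2 - (3 * b + u ^+ 2)); first by ring.
  by rewrite ep -eq; ring.
case: (image 1 (expr1n _ 3)) => [// | [[w hw] x1]]; have hw3 := cyclo3_cube1 hw.
case: (image w hw3) => [// | [_ xw]].
case: (image (w ^+ 2) (cube1_sqr hw3)) => [// | [_ xw2]].
rewrite mul1r expr1n mulr1 in x1.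
by have := hessian_flex_x_cyclo3 h3 hw (x_inj _ _ x1 xw) (x_inj _ _ x1 xw2).
Qed.

Lemma hessian_isoP u v :
  (3 : F) != 0 -> u ^+ 3 != 27 -> hessian_iso u v <-> hessian_related u v.
Proof.
move=> h3 hu; split; first exact: hessian_iso_related.
case=> [[z hz ->] | [[w hw] [z1 [z2 [hz1 hz2 ->]]]]]; first exact: hessian_iso_rot.
have hu2 : (z2 ^+ 2 * u) ^+ 3 != 27 by rewrite exprMn cube1_sqr // mul1r.
have -> : 3 * z1 * (u + 6 * z2) / (u - 3 * z2)
          = z1 * (3 * (z2 ^+ 2 * u + 6) / (z2 ^+ 2 * u - 3)).
  have hd1 := hessian_sub3_neq0 hz2 hu.
  have hd2 := hessian_sub3_neq0 (expr1n _ 3) hu2; rewrite mulr1 in hd2.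
  by field: hz2; rewrite hd1 hd2.
apply: weier_iso_trans (hessian_iso_rot u (cube1_sqr hz2)) _.
apply: weier_iso_trans (hessian_iso_mobius h3 hu2 hw) _.
exact: hessian_iso_rot.
Qed.

Lemma hessian_iso_char3 u v :
  (3 : F) = 0 -> u ^+ 3 != 27 -> hessian_iso u v -> v = u.
Proof.
move=> h3 hu [al [b [g [d [al0 [/= e1 e2 e3 e4 e6]]]]]].
have mul3 x : 3 * x = 0 by rewrite h3 mul0r.
have h9 : (9 : F) = 0 by rewrite -(mul3 3); ring.
have h27 : (27 : F) = 0 by rewrite -(mul3 9); ring.
have u0 : u != 0 by apply: contra_neq hu => ->; rewrite h27 expr0n.
have hgu : g * (u + g) = 0.
  by transitivity (3 * b - al ^+ 2 * 0); [rewrite e2; ring | rewrite mul3 mulr0 subr0].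
have hd : d = b * u.
  apply/eqP; rewrite -subr_eq0; apply/eqP.
  by transitivity (3 * d + 9 - al ^+ 3 * 9); [rewrite e3; ring | rewrite h9 mul3; ring].
have hb : b = 0.
  have : b * u ^+ 2 = 0.
    transitivity (3 * (b ^+ 2 - b * g * u) - al ^+ 4 * - (9 * v) - 9 * (u + g)).
      by rewrite e4 hd; ring.
    by rewrite h9 mul3; ring.
  by move/eqP; rewrite mulf_eq0 expf_eq0 /= (negbTE u0) orbF => /eqP.
have ch3 : 3 \in [pchar F] by rewrite inE /= h3 eqxx.
have hv : al ^+ 2 * v = u.
  apply: (fmorph_inj (pFrobenius_aut ch3)); change ((al ^+ 2 * v) ^+ 3 = u ^+ 3).
  transitivity (- (al ^+ 6 * - (v ^+ 3 + 27)) - al ^+ 6 * 27); first by ring.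
  by rewrite e6 hd hb h27; ring.
have hsq : (al * v) ^+ 2 = u ^+ 2.
  by rewrite e1; transitivity (u ^+ 2 + 4 * (g * (u + g))); [ring | rewrite hgu; ring].
apply: (mulIf u0); transitivity ((al * v) ^+ 2); first by rewrite -{1}hv; ring.
by rewrite hsq; ring.
Qed.

End HessianModel.

Lemma finField_cyclo3 (F : finFieldType) :
  (#|F| %% 3 = 1)%N <-> (3 : F) != 0 /\ exists w : F, w ^+ 2 + w + 1 = 0.
Proof.
split=> [q1 | [h3 [w hw]]].
  have : (3 %| #|[set: {unit F}]|)%N.
    by rewrite card_finField_unit (divn_eq #|F| 3) q1 addn1 dvdn_mull.
  case/(Cauchy (isT : prime 3)) => x _ ox.
  have w3 : val x ^+ 3 = 1 by rewrite -FinRing.val_unitX -ox expg_order.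
  have w1 : val x != 1.
    apply: contra_eq_neq ox => x1; rewrite (_ : x = 1%g) ?order1 //.
    by apply: val_inj; rewrite x1 FinRing.val_unit1.
  have hw : val x ^+ 2 + val x + 1 = 0.
    have : (val x - 1) * (val x ^+ 2 + val x + 1) = 0 by ring: w3.
    by move/eqP; rewrite mulf_eq0 subr_eq0 (negbTE w1) => /eqP.
  split; last by exists (val x).
  apply: contra_neq w1 => h3.
  have : (val x - 1) ^+ 2 = 0.
    by transitivity (val x ^+ 2 + val x + 1 - 3 * val x); [ring | rewrite hw h3; ring].
  by move/eqP; rewrite expf_eq0 subr_eq0 => /eqP.
have w3 := cyclo3_cube1 hw; have w1 := cyclo3_neq1 h3 hw; have w0 := cube1_neq0 w3.
have := expf_card w; rewrite {1}(divn_eq #|F| 3) exprD mulnC exprM w3 expr1n mul1r.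
have := ltn_mod #|F| 3; case: (#|F| %% 3)%N => [|[|[|//]]] // _.
  by rewrite expr0 => w1'; rewrite -w1' eqxx in w1.
move=> w2; exfalso; move/eqP: w1; apply.
by apply: (mulfI w0); rewrite -expr2 w2 mulr1.
Qed.

Theorem mainTheorem10 (F : finFieldType) (u v : F)
    (hu : u ^+ 3 != 27) (hv : v ^+ 3 != 27) :
  hessian_iso u v <->
  exists z1 z2 : F, z1 ^+ 3 = 1 /\ z2 ^+ 3 = 1 /\
    (v = z1 * u \/
     ((#|F| %% 3 = 1)%N /\ v = 3 * z1 * (u + 6 * z2) / (u - 3 * z2))).
Proof.
have [h3 | h3] := eqVneq (3 : F) 0.
  split=> [/(hessian_iso_char3 h3 hu) -> |].
    by exists 1, 1; rewrite expr1n mul1r; split=> //; split=> //; left.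
  case=> z1 [z2 [hz1 [_ [-> | [/finField_cyclo3 [] ]]]]].
    exact: hessian_iso_rot.
  by rewrite h3 eqxx.
rewrite hessian_isoP //; split.
  case=> [[z hz ->] | [[w hw] [z1 [z2 [hz1 hz2 ->]]]]].
    by exists z, 1; rewrite expr1n; split=> //; split=> //; left.
  exists z1, z2; split=> //; split=> //; right; split=> //.
  by apply/finField_cyclo3; split=> //; exists w.
case=> z1 [z2 [hz1 [hz2 [-> | [/finField_cyclo3 [_ cyclo3] ->]]]]].
  by left; exists z1.
by right; split=> //; exists z1, z2.
Qed.
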